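(* Let $n$ be a positive integer, and let $a\in\mathcal{T}_n$ with $\operatorname{rank}(a)=r$. Then (i) $a\mathcal{T}_na\cong\mathcal{T}_r^c$ for some $c\in\mathcal{T}_r$ with $\operatorname{rank}(c)=\operatorname{rank}(a^2)$; (ii) $\mathcal{T}_n^a\cong b\mathcal{T}_{2n-r}b$ for some $b\in\mathcal{T}_{2n-r}$ with $\operatorname{rank}(b)=n$.
   Context: For a positive integer $m$, $\mathcal{T}_m$ denotes the full transformation semigroup on $\{1,\ldots,m\}$: the set of all functions $\{1,\ldots,m\}\to\{1,\ldots,m\}$ under composition (functions are written to the right of their arguments and composed left-to-right). The rank of $f\in\mathcal{T}_m$ is $\operatorname{rank}(f)=|\operatorname{im}(f)|$. For a semigroup $S$ and $a\in S$, the local subsemigroup $aSa=\{axa: x\in S\}$ is a subsemigroup of $S$ (with the operation of $S$), and the variant $S^a$ is the semigroup with underlying set $S$ and operation $x\star_a y=xay$. Isomorphism $\cong$ means semigroup isomorphism. *)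

From mathcomp Require Import all_boot.
Set Implicit Arguments. Unset Strict Implicit. Unset Printing Implicit Defensive.

(* Full transformation semigroup T_m on {1..m}, represented on 'I_m. *)
Definition trans (m : nat) := {ffun 'I_m -> 'I_m}.

(* Product, functions written on the right: x (f g) = (x f) g. *)
Definition tmul (m : nat) (f g : trans m) : trans m := [ffun x => g (f x)].

Definition trank (m : nat) (f : trans m) : nat := #|[set f x | x : 'I_m]|.

Definition local_sub (m : nat) (a : trans m) : {set trans m} :=
  [set tmul (tmul a x) a | x : trans m].

Definition variant_op (m : nat) (c : trans m) (x y : trans m) : trans m :=
  tmul (tmul x c) y.

Definition sg_iso (T1 T2 : finType) (A : {set T1}) (op1 : T1 -> T1 -> T1)
    (B : {set T2}) (op2 : T2 -> T2 -> T2) : Prop :=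
  exists phi : T1 -> T2,
    [/\ {in A, forall x, phi x \in B},
        {in A &, injective phi},
        {in B, forall y, exists2 x, x \in A & phi x = y}
      & {in A &, forall x y, phi (op1 x y) = op2 (phi x) (phi y)}].

(** If [im b] is the image of an injection [e : 'I_k -> 'I_N] with retraction
    [e'], then [b x b] is determined by the map [j |-> e' (b (x (e j)))] of ['I_k],
    and every map of ['I_k] arises in this way.  Since [b x b b y b] corresponds to
    [x' c y'] with [c = e' b e] the restriction of [b] to its image, this gives
    [b T_N b ≅ T_k^c]; moreover [rank c = rank b^2] because [b] maps [im b] onto
    [im b^2].  Part (i) takes [b = a] and [e] an enumeration of [im a].  For part
    (ii), extend [a] to [N = n + (n - r)] points by sending the [n - r] new points
    onto the complement of [im a]: the extension [b] has image ['I_n], so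
    [rank b = n], and its restriction to ['I_n] is [a] itself. *)
From mathcomp Require Import all_boot zify.

Set Implicit Arguments.
Unset Strict Implicit.
Unset Printing Implicit Defensive.

Lemma sg_iso_can (T1 T2 : finType) (A : {set T1}) (op1 : T1 -> T1 -> T1)
    (B : {set T2}) (op2 : T2 -> T2 -> T2) (f : T1 -> T2) (g : T2 -> T1) :
    {in A, forall x, f x \in B} -> {in B, forall y, g y \in A} ->
    {in A, cancel f g} -> {in B, cancel g f} ->
    {in A &, forall x y, f (op1 x y) = op2 (f x) (f y)} ->
  sg_iso A op1 B op2.
Proof.
move=> fAB gBA fK gK fM; exists f; split=> //; first exact: can_in_inj fK.
by move=> y By; exists (g y); rewrite ?gBA ?gK.
Qed.

Section LocalSubVariant.

Variables (N k : nat) (b : trans N) (e : 'I_k -> 'I_N) (e' : 'I_N -> 'I_k).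
Hypothesis eK : cancel e e'.
Hypothesis im_b : [set b z | z : 'I_N] = [set e j | j : 'I_k].

Lemma e'bK z : e (e' (b z)) = b z.
Proof.
have /imsetP [j _ ->] : b z \in [set e j | j : 'I_k] by rewrite -im_b imset_f.
by rewrite eK.
Qed.

Let pre (w : 'I_N) : 'I_N := odflt w [pick z | b z == w].

Lemma b_pre j : b (pre (e j)) = e j.
Proof.
rewrite /pre; case: pickP => [z /eqP // | no_pre].
have /imsetP [z _ bz] : e j \in [set b z | z : 'I_N] by rewrite im_b imset_f.
by move: (no_pre z); rewrite bz eqxx.
Qed.

Definition restr_im : trans k := [ffun j => e' (b (e j))].

Definition to_local (x : trans k) : trans N := [ffun z => e (x (e' (b z)))].

Definition of_local (h : trans N) : trans k := [ffun j => e' (h (pre (e j)))].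

Lemma to_local_in x : to_local x \in local_sub b.
Proof.
apply/imsetP; exists [ffun w => pre (e (x (e' w)))] => //.
by apply/ffunP => z; rewrite !ffunE b_pre.
Qed.

Lemma to_localK : cancel to_local of_local.
Proof. by move=> x; apply/ffunP => j; rewrite !ffunE b_pre !eK. Qed.

Lemma of_localK : {in local_sub b, cancel of_local to_local}.
Proof.
by move=> _ /imsetP [x _ ->]; apply/ffunP => z; rewrite !ffunE b_pre !e'bK.
Qed.

Lemma to_localM x y :
  to_local (variant_op restr_im x y) = tmul (to_local x) (to_local y).
Proof. by apply/ffunP => z; rewrite !ffunE. Qed.

Lemma variant_iso_local_sub :
  sg_iso [set: trans k] (variant_op restr_im) (local_sub b) (@tmul N).
Proof.
apply: (@sg_iso_can _ _ _ _ _ _ to_local of_local).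
- by move=> x _; apply: to_local_in.
- by move=> h _; rewrite inE.
- by move=> x _; apply: to_localK.
- exact: of_localK.
- by move=> x y _ _; apply: to_localM.
Qed.

Lemma local_sub_iso_variant :
  sg_iso (local_sub b) (@tmul N) [set: trans k] (variant_op restr_im).
Proof.
apply: (@sg_iso_can _ _ _ _ _ _ of_local to_local).
- by move=> h _; rewrite inE.
- by move=> x _; apply: to_local_in.
- exact: of_localK.
- by move=> x _; apply: to_localK.
move=> h1 h2 /of_localK h1K /of_localK h2K.
by rewrite -{1}h1K -{1}h2K -to_localM to_localK.
Qed.

Lemma trank_im : trank b = k.
Proof. by rewrite /trank im_b card_imset ?card_ord //; apply: can_inj eK. Qed.

Lemma trank_restr_im : trank restr_im = trank (tmul b b).
Proof.
rewrite /trank.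
have -> : [set restr_im j | j : 'I_k] = e' @: [set tmul b b z | z : 'I_N].
  apply/setP => y; apply/imsetP/imsetP => [[j _ ->] | [_ /imsetP [z _ ->] ->]].
  - have /imsetP [z _ ez] : e j \in [set b z | z : 'I_N] by rewrite im_b imset_f.
    by exists (tmul b b z); rewrite ?imset_f // !ffunE ez.
  - by exists (e' (b z)); rewrite // !ffunE e'bK.
rewrite card_in_imset // => _ _ /imsetP [x _ ->] /imsetP [y _ ->].
by rewrite !ffunE => eq_e'; rewrite -e'bK eq_e' e'bK.
Qed.

End LocalSubVariant.

Lemma im_enum_val (n : nat) (a : trans n) :
  [set a x | x : 'I_n] = [set enum_val j | j : 'I_(trank a)].
Proof.
apply/setP => y; apply/idP/imsetP => [a_y | [j _ ->]]; last exact: enum_valP.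
by exists (enum_rank_in a_y y); rewrite ?enum_rankK_in.
Qed.

Lemma trank_le (m : nat) (f : trans m) : trank f <= m.
Proof. by rewrite -[m in _ <= m]card_ord max_card. Qed.

Section Extension.

Variables (n : nat) (x0 : 'I_n) (a : trans n).

Let I := [set a x | x : 'I_n].
Let N := 2 * n - trank a.

Lemma le_n_ext : n <= N.
Proof. by have := trank_le a; rewrite /N; lia. Qed.

Definition narrow (z : 'I_N) : 'I_n := insubd x0 (val z).

Lemma widenK : cancel (widen_ord le_n_ext) narrow.
Proof. by move=> j; apply: val_inj; rewrite /narrow val_insubd /= ltn_ord. Qed.

(* The points [n + i] are sent onto the [i]-th point outside [im a]. *)
Definition extend : trans N :=
  [ffun z => widen_ord le_n_ext
     (if val z < n then a (narrow z) else nth x0 (enum (~: I)) (val z - n))].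

Lemma extend_widen j : extend (widen_ord le_n_ext j) = widen_ord le_n_ext (a j).
Proof. by rewrite ffunE /= ltn_ord widenK. Qed.

Lemma im_extend :
  [set extend z | z : 'I_N] = [set widen_ord le_n_ext j | j : 'I_n].
Proof.
apply/setP => y; apply/imsetP/imsetP => [[z _ ->] | [j _ ->]].
  by rewrite ffunE; eexists.
have [/imsetP [x _ ->] | j_notin] := boolP (j \in I).
  by exists (widen_ord le_n_ext x); rewrite ?extend_widen.
set i := index j (enum (~: I)).
have lt_i : i < n - trank a.
  have : trank a + #|~: I| = n by rewrite /trank -/I cardsC card_ord.
  have : i < size (enum (~: I)) by rewrite index_mem mem_enum inE.
  by rewrite -cardE; lia.
have lt_z : n + i < N by have := trank_le a; rewrite /N; lia.
exists (Ordinal lt_z) => //.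
by rewrite ffunE /= ltnNge leq_addr addKn nth_index // mem_enum inE.
Qed.

Lemma trank_extend : trank extend = n.
Proof. exact: trank_im widenK im_extend. Qed.

Lemma variant_iso_local_sub_extend :
  sg_iso [set: trans n] (variant_op a) (local_sub extend) (@tmul N).
Proof.
have -> : variant_op a = variant_op (restr_im extend (widen_ord le_n_ext) narrow).
  by congr variant_op; apply/ffunP => j; rewrite ffunE extend_widen widenK.
exact: variant_iso_local_sub widenK im_extend.
Qed.

End Extension.

Theorem theorem1p4 (n : nat) (a : trans n) : 0 < n ->
  (exists c : trans (trank a),
      trank c = trank (tmul a a) /\
      sg_iso (local_sub a) (@tmul n) [set: trans (trank a)] (variant_op c))
  /\
  (exists b : trans (2 * n - trank a),
      trank b = n /\
      sg_iso [set: trans n] (variant_op a) (local_sub b) (@tmul (2 * n - trank a))).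
Proof.
move=> n_gt0; pose x0 := Ordinal n_gt0; split.
- have a_x0 : a x0 \in [set a x | x : 'I_n] by apply: imset_f.
  have eK : cancel enum_val (enum_rank_in a_x0) := enum_valK_in a_x0.
  exists (restr_im a enum_val (enum_rank_in a_x0)); split.
  + exact: trank_restr_im eK (im_enum_val a).
  + exact: local_sub_iso_variant eK (im_enum_val a).
- exists (extend x0 a); split.
  + exact: trank_extend.
  + exact: variant_iso_local_sub_extend.
Qed.
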